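(* Let $(R,\mathfrak{m})$ be a one-dimensional local Noetherian ring and let $n$ be a positive integer. If every $\mathfrak{m}$-primary ideal of $R$ has an $n$-generated reduction, then every ideal of $R$ has an $n$-generated reduction.
   Context: A reduction of an ideal $I$ is an ideal $J\subseteq I$ such that $I^{m+1}=JI^m$ for some $m>0$; it is $n$-generated if it can be generated by $n$ elements. *)

From HB Require Import structures.
From mathcomp Require Import all_boot all_algebra.
Set Implicit Arguments. Unset Strict Implicit. Unset Printing Implicit Defensive.
Import GRing.Theory.
Local Open Scope ring_scope.

Section Ideals.
Variable R : comNzRingType.

Definition subR (I J : R -> Prop) : Prop := forall x, I x -> J x.
Definition eqR (I J : R -> Prop) : Prop := forall x, I x <-> J x.

Definition is_ideal (I : R -> Prop) : Prop :=
  [/\ I 0, (forall x y, I x -> I y -> I (x + y)) & (forall r x, I x -> I (r * x))].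

Definition gen (S : R -> Prop) : R -> Prop :=
  fun x => forall J, is_ideal J -> subR S J -> J x.

Definition idmul (I J : R -> Prop) : R -> Prop :=
  gen (fun z => exists x y, [/\ I x, J y & z = x * y]).

Fixpoint idpow (I : R -> Prop) (k : nat) : R -> Prop :=
  match k with
  | 0%N => fun _ => True
  | k'.+1 => idmul I (idpow I k')
  end.

Definition n_generated (n : nat) (J : R -> Prop) : Prop :=
  exists f : 'I_n -> R, eqR J (gen (fun z => exists i, z = f i)).

Definition finitely_generated (J : R -> Prop) : Prop :=
  exists n, n_generated n J.

Definition reduction (J I : R -> Prop) : Prop :=
  [/\ is_ideal J, subR J I &
      exists m : nat, (0 < m)%N /\ eqR (idpow I m.+1) (idmul J (idpow I m))].

Definition has_n_generated_reduction (n : nat) (I : R -> Prop) : Prop :=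
  exists J, reduction J I /\ n_generated n J.

Definition is_prime_ideal (P : R -> Prop) : Prop :=
  [/\ is_ideal P, ~ P 1 & forall x y, P (x * y) -> P x \/ P y].

Definition is_maximal_ideal (M : R -> Prop) : Prop :=
  [/\ is_ideal M, ~ M 1 &
      forall J, is_ideal J -> subR M J -> ~ J 1 -> subR J M].

Definition local_with (m : R -> Prop) : Prop :=
  is_maximal_ideal m /\ forall M, is_maximal_ideal M -> eqR M m.

Definition noetherian : Prop :=
  forall I, is_ideal I -> finitely_generated I.

Definition strict_subR (I J : R -> Prop) : Prop := subR I J /\ ~ subR J I.

Definition krull_dim_one : Prop :=
  (exists P0 P1, [/\ is_prime_ideal P0, is_prime_ideal P1 & strict_subR P0 P1]) /\
  ~ (exists P0 P1 P2, [/\ is_prime_ideal P0, is_prime_ideal P1, is_prime_ideal P2,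
                         strict_subR P0 P1 & strict_subR P1 P2]).

Definition is_primary_ideal (Q : R -> Prop) : Prop :=
  [/\ is_ideal Q, ~ Q 1 &
      forall x y, Q (x * y) -> Q x \/ exists k : nat, Q (y ^+ k)].

Definition radical (I : R -> Prop) : R -> Prop := fun x => exists k : nat, I (x ^+ k).

Definition primary_to (m Q : R -> Prop) : Prop :=
  is_primary_ideal Q /\ eqR (radical Q) m.

End Ideals.

From mathcomp Require Import all_boot all_algebra.
From mathcomp Require Import ring.
From Stdlib Require Import ClassicalEpsilon.
Set Implicit Arguments. Unset Strict Implicit. Unset Printing Implicit Defensive.
Import GRing.Theory.
Local Open Scope ring_scope.

(** Take an ideal M maximal among those without an n-generated reduction
    (Noetherian induction). If M = R it is its own reduction; if its radical
    is m it is m-primary. Otherwise some x in m has no power in M, so M lies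
    in a prime P avoiding x, and P is a minimal prime because dim R = 1. In a
    Noetherian ring some s outside P kills a power M^e, and for a large power
    z = s^j the principal ideal (z) then meets M^e only in 0. By maximality
    M + (z) has an n-generated reduction, and projecting its generators to M
    gives an n-generated reduction of M modulo (z), hence of M itself since
    (z) does not meet M^e. *)

Section Ideals.
Variable R : comNzRingType.
Implicit Types (A B C I J M P S Z : R -> Prop) (a b c s w x y z : R).

Section IdealClosure.
Variable I : R -> Prop.
Hypothesis idealI : is_ideal I.

Lemma ideal0 : I 0.
Proof. by case: idealI. Qed.

Lemma idealD x y : I x -> I y -> I (x + y).
Proof. by case: idealI => _ + _; apply. Qed.

Lemma idealMl a x : I x -> I (a * x).
Proof. by case: idealI => _ _; apply. Qed.

Lemma idealMr a x : I x -> I (x * a).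
Proof. by rewrite mulrC; apply: idealMl. Qed.

Lemma idealB x y : I x -> I y -> I (x - y).
Proof. by move=> Ix Iy; rewrite -mulN1r; apply/idealD/idealMl. Qed.

End IdealClosure.

Lemma subRR A : subR A A.
Proof. by []. Qed.

Lemma gen_is_ideal S : is_ideal (gen S).
Proof.
split=> [J /ideal0 //|x y Sx Sy J idJ SJ|a x Sx J idJ SJ].
  by apply: idealD; [|apply: Sx|apply: Sy].
by apply: idealMl; last apply: Sx.
Qed.

Lemma sub_gen S : subR S (gen S).
Proof. by move=> x Sx J _; apply. Qed.

Lemma gen_min S J : is_ideal J -> subR S J -> subR (gen S) J.
Proof. by move=> idJ SJ x; apply. Qed.

Lemma idmul_is_ideal A B : is_ideal (idmul A B).
Proof. exact: gen_is_ideal. Qed.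

Lemma idmul_mem A B x y : A x -> B y -> idmul A B (x * y).
Proof. by move=> Ax By; apply: sub_gen; exists x, y. Qed.

Lemma idmul_min A B C : is_ideal C ->
  (forall x y, A x -> B y -> C (x * y)) -> subR (idmul A B) C.
Proof. by move=> idC ABC; apply: gen_min => // _ [x [y [Ax By ->]]]; apply: ABC. Qed.

Lemma idmulS A A' B B' : subR A A' -> subR B B' -> subR (idmul A B) (idmul A' B').
Proof.
move=> AA' BB'; apply: idmul_min; first exact: idmul_is_ideal.
by move=> x y /AA' Ax /BB' By; apply: idmul_mem.
Qed.

Lemma idmulCA A B C : subR (idmul A (idmul B C)) (idmul B (idmul A C)).
Proof.
apply: idmul_min; first exact: idmul_is_ideal.
move=> a w Aa BCw; have idBAC := @idmul_is_ideal B (idmul A C).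
pose K w := idmul B (idmul A C) (a * w).
have idK : is_ideal K.
  split=> [|x y Kx Ky|b x Kx]; rewrite /K.
  - by rewrite mulr0; apply: ideal0.
  - by rewrite mulrDr; apply: (idealD idBAC Kx Ky).
  - by rewrite mulrCA; apply: (idealMl idBAC b Kx).
apply: (idmul_min idK _ BCw) => b c Bb Cc.
by rewrite /K mulrCA; apply: idmul_mem => //; apply: idmul_mem.
Qed.

Lemma eq0_is_ideal : is_ideal (fun w : R => w = 0).
Proof. by split=> // [x y -> ->|a x ->]; rewrite ?addr0 ?mulr0. Qed.

Lemma idpow_is_ideal I k : is_ideal (idpow I k).
Proof. by case: k => [|k]; [split | apply: idmul_is_ideal]. Qed.

Lemma idpowS I J k : subR I J -> subR (idpow I k) (idpow J k).
Proof. by move=> IJ; elim: k => [|k IHk] //=; apply: idmulS. Qed.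

Lemma idpow_leq I i j : (j <= i)%N -> subR (idpow I i) (idpow I j).
Proof.
elim: i j => [|i IHi] [|j] //= le_ji.
by apply: idmulS => //; apply: IHi.
Qed.

Definition idadd A B : R -> Prop := fun x => exists a b, [/\ A a, B b & x = a + b].

Definition principal z : R -> Prop := fun x => exists c, x = c * z.

Lemma idadd_is_ideal A B : is_ideal A -> is_ideal B -> is_ideal (idadd A B).
Proof.
move=> idA idB; split.
- by exists 0, 0; rewrite addr0; split=> //; apply: ideal0.
- move=> _ _ [a [b [Aa Bb ->]]] [a' [b' [Aa' Bb' ->]]].
  by exists (a + a'), (b + b'); split; [apply: idealD | apply: idealD | ring].
- move=> c _ [a [b [Aa Bb ->]]].
  by exists (c * a), (c * b); split; [apply: idealMl | apply: idealMl | ring].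
Qed.

Lemma idadd_subl A B : is_ideal B -> subR A (idadd A B).
Proof. by move=> idB x Ax; exists x, 0; rewrite addr0; split=> //; apply: ideal0. Qed.

Lemma idadd_subr A B : is_ideal A -> subR B (idadd A B).
Proof. by move=> idA x Bx; exists 0, x; rewrite add0r; split=> //; apply: ideal0. Qed.

Lemma principal_is_ideal z : is_ideal (principal z).
Proof.
split; first by exists 0; rewrite mul0r.
- by move=> _ _ [c ->] [d ->]; exists (c + d); ring.
- by move=> a _ [c ->]; exists (a * c); ring.
Qed.

Lemma principal_mem z : principal z z.
Proof. by exists 1; rewrite mul1r. Qed.

Lemma principal_pow z k : subR (idpow (principal z) k) (principal (z ^+ k)).
Proof.
elim: k => [|k IHk] /=; first by move=> w _; exists w; rewrite expr0 mulr1.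
apply: idmul_min; first exact: principal_is_ideal.
by move=> _ w [c ->] /IHk [d ->]; exists (c * d); rewrite exprS; ring.
Qed.

Lemma idadd_principal_mul M a b u v : is_ideal M -> M (a * b) ->
  idadd M (principal a) u -> idadd M (principal b) v -> M (u * v).
Proof.
move=> idM Mab [p [_ [Mp [c ->] ->]]] [q [_ [Mq [d ->] ->]]].
have -> : (p + c * a) * (q + d * b) = p * q + d * b * p + c * a * q + c * d * (a * b).
  by ring.
by repeat apply: (idealD idM); apply: (idealMl idM).
Qed.

Lemma idmul_idadd A C Z : is_ideal Z ->
  subR (idmul (idadd A Z) (idadd C Z)) (idadd (idmul A C) Z).
Proof.
move=> idZ; apply: idmul_min; first exact: idadd_is_ideal (idmul_is_ideal A C) idZ.
move=> _ _ [a [z1 [Aa Zz1 ->]]] [c [z2 [Cc Zz2 ->]]].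
exists (a * c), (a * z2 + z1 * c + z1 * z2); split; first exact: idmul_mem.
  by repeat apply: (idealD idZ); [apply: (idealMl idZ) | apply: (idealMr idZ) ..].
by ring.
Qed.

Lemma idpow_idadd I Z k : is_ideal Z ->
  subR (idpow (idadd I Z) k) (idadd (idpow I k) Z).
Proof.
move=> idZ; elim: k => [|k IHk] /=.
  by move=> x _; exists x, 0; rewrite addr0; split=> //; apply: ideal0.
by move=> x /(idmulS (@subRR _) IHk) /idmul_idadd; apply.
Qed.

Lemma idpow_idadd_split A B i j : is_ideal A -> is_ideal B ->
  subR (idpow (idadd A B) (i + j)) (idadd (idpow A i) (idpow B j)).
Proof.
move=> idA idB.
suff splitk k : forall i j, (i + j)%N = k ->
    subR (idpow (idadd A B) k) (idadd (idpow A i) (idpow B j)) by apply: splitk.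
clear i j; elim: k => [|k IHk] i j.
  by case: i j => [|i] [|j] // _ x _; exists x, 0; rewrite addr0.
have idpow0 X l : idpow X l 0 := ideal0 (idpow_is_ideal X l).
case: i => [|i] ij_k; first by move=> x _; exists x, 0; rewrite addr0.
case: j ij_k => [|j] ij_k; first by move=> x _; exists 0, x; rewrite add0r.
have /IHk sub1 : (i + j.+1)%N = k by move: ij_k; rewrite addSn => -[].
have /IHk sub2 : (i.+1 + j)%N = k by move: ij_k; rewrite addnS => -[].
have idT := idadd_is_ideal (idpow_is_ideal A i.+1) (idpow_is_ideal B j.+1).
apply: idmul_min => // _ x [u [v [Au Bv ->]]] ABx; rewrite mulrDl; apply: (idealD idT).
- have [p [q [Ap Bq ->]]] := sub1 x ABx; rewrite mulrDr; apply: (idealD idT).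
    by apply: (idadd_subl (idpow_is_ideal B _)); apply: idmul_mem.
  by apply: (idadd_subr (idpow_is_ideal A _)); apply: (idealMl (idpow_is_ideal B _)).
- have [p [q [Ap Bq ->]]] := sub2 x ABx; rewrite mulrDr; apply: (idealD idT).
    by apply: (idadd_subl (idpow_is_ideal B _)); apply: (idealMl (idpow_is_ideal A _)).
  by apply: (idadd_subr (idpow_is_ideal A _)); apply: idmul_mem.
Qed.

Definition minimal_prime P : Prop :=
  is_prime_ideal P /\ forall P', is_prime_ideal P' -> ~ strict_subR P' P.

Lemma prime_notin_expr P s k : is_prime_ideal P -> ~ P s -> ~ P (s ^+ k).
Proof.
case=> _ P1 Pmul Ps; elim: k => [|k IHk]; first by rewrite expr0.
by rewrite exprS => /Pmul [].
Qed.

Lemma maximal_ideal_prime M : is_maximal_ideal M -> is_prime_ideal M.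
Proof.
case=> idM M1 maxM; split=> // a b Mab; have [Ma|Ma] := classic (M a); [by left|right].
have idMa := idadd_is_ideal idM (principal_is_ideal a).
have [t [_ [Mt [c ->] tca1]]] : idadd M (principal a) 1.
  apply: NNPP => Ma1; apply/Ma/(maxM _ idMa (idadd_subl (principal_is_ideal a)) Ma1).
  exact: (idadd_subr idM (principal_mem a)).
have -> : b = b * t + c * (a * b) by rewrite -[b in LHS]mulr1 tca1; ring.
by apply: (idealD idM); apply: (idealMl idM).
Qed.

Lemma krull_dim_one_minimal_prime P Q : krull_dim_one R ->
  is_prime_ideal P -> is_prime_ideal Q -> strict_subR P Q -> minimal_prime P.
Proof.
move=> [_ no_chain] primeP primeQ PQ; split=> // P' primeP' P'P.
by apply: no_chain; exists P', P, Q.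
Qed.

Section Noetherian.
Hypothesis noethR : noetherian R.

Lemma noetherian_stationary (chain : nat -> R -> Prop) :
  (forall k, is_ideal (chain k)) -> (forall k, subR (chain k) (chain k.+1)) ->
  exists N, subR (chain N.+1) (chain N).
Proof.
move=> idchain chainS.
have chain_leq i j : (i <= j)%N -> subR (chain i) (chain j).
  move=> /subnK <-; elim: (j - i)%N => [|d IHd] x //= /IHd.
  by rewrite addSn; apply: chainS.
pose U x := exists k, chain k x.
have idU : is_ideal U.
  split; first by exists 0%N; apply: (ideal0 (idchain 0%N)).
  - move=> x y [i Cx] [j Cy]; exists (maxn i j); apply: (idealD (idchain _)).
      by apply: chain_leq Cx; apply: leq_maxl.
    by apply: chain_leq Cy; apply: leq_maxr.
  - by move=> a x [i Cx]; exists i; apply: (idealMl (idchain i)).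
have [n [f Ugen]] := noethR idU.
have [level levelP] : exists level : 'I_n -> nat, forall i, chain (level i) (f i).
  apply: (choice (fun i k => chain k (f i))) => i.
  by apply/Ugen; apply: sub_gen; exists i.
exists (\max_(i < n) level i)%N => x Cx.
have /Ugen : U x by exists (\max_(i < n) level i).+1%N.
apply: gen_min => // _ [i ->]; apply: chain_leq (levelP i).
exact: leq_bigmax.
Qed.

Lemma noetherian_maximal (F : (R -> Prop) -> Prop) I :
  is_ideal I -> F I ->
  exists M, [/\ is_ideal M, F M & forall J, is_ideal J -> F J -> subR M J -> subR J M].
Proof.
move=> idI FI; apply: NNPP => no_max.
pose G := {M : R -> Prop | is_ideal M /\ F M}.
pose grows (X Y : G) := subR (sval X) (sval Y) /\ ~ subR (sval Y) (sval X).
have [next nextP] : exists next : G -> G, forall X, grows X (next X).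
  apply: (choice grows) => -[M [idM FM]]; apply: NNPP => M_max; apply: no_max.
  exists M; split=> // J idJ FJ MJ; apply: NNPP => JM; apply: M_max.
  by exists (exist _ J (conj idJ FJ)).
pose I0 : G := exist _ I (conj idI FI).
pose chain k := sval (iter k next I0).
have [N chain_stops] : exists N, subR (chain N.+1) (chain N).
  apply: (@noetherian_stationary chain) => k; first by case: (svalP (iter k next I0)).
  by rewrite /chain iterS; case: (nextP (iter k next I0)).
by case: (nextP (iter N next I0)).
Qed.

Lemma proper_ideal_sub_local m I : local_with m -> is_ideal I -> ~ I 1 -> subR I m.
Proof.
move=> [_ local_m] idI I1.
have [M [idM [IM M1] maxM]] :=
  noetherian_maximal (F := fun K => subR I K /\ ~ K 1) idI (conj (@subRR I) I1).
have maximalM : is_maximal_ideal M.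
  by split=> // J idJ MJ J1; apply: maxM => //; split=> // x /IM /MJ.
by move=> x /IM /(local_m _ maximalM x).
Qed.

Lemma local_unit m y : local_with m -> ~ m y -> exists c, c * y = 1.
Proof.
move=> local_m my; have [[c ->]|y1] := classic (principal y 1); first by exists c.
case: my; apply: (proper_ideal_sub_local local_m (principal_is_ideal y) y1).
exact: principal_mem.
Qed.

Lemma local_primary_to m I : local_with m -> is_ideal I -> ~ I 1 ->
  (forall x, m x -> exists k, I (x ^+ k)) -> primary_to m I.
Proof.
move=> local_m idI I1 m_rad; have Im := proper_ideal_sub_local local_m idI I1.
have [_ m1 m_mul] := maximal_ideal_prime local_m.1.
split; first split=> // x y Ixy.
  have [my|my] := classic (m y); first by right; apply: m_rad.
  left; have [c cy1] := local_unit local_m my.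
  by rewrite -[x]mul1r -cy1 -mulrA (mulrC y); apply: (idealMl idI).
move=> x; split=> [[k /Im]|]; last exact: m_rad.
by elim: k => [|k IHk]; [rewrite expr0 | rewrite exprS => /m_mul []].
Qed.

Lemma prime_avoiding I S : is_ideal I -> S 1 ->
  (forall a b, S a -> S b -> S (a * b)) -> (forall s, S s -> ~ I s) ->
  exists P, [/\ is_prime_ideal P, subR I P & forall s, S s -> ~ P s].
Proof.
move=> idI S1 S_mul IS.
have [M [idM [IM MS] maxM]] := noetherian_maximal
  (F := fun K => subR I K /\ forall s, S s -> ~ K s) idI (conj (@subRR I) IS).
have meetS a : ~ M a -> exists s, S s /\ idadd M (principal a) s.
  move=> Ma; apply: NNPP => no_s; apply: Ma.
  have MMa := @idadd_subl M _ (principal_is_ideal a).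
  apply: (maxM _ (idadd_is_ideal idM (principal_is_ideal a))) => //.
    by split=> [x /IM /MMa //|s Ss Ms]; apply: no_s; exists s.
  exact: (idadd_subr idM (principal_mem a)).
exists M; split=> //; split=> // [M1|a b Mab]; first exact: MS S1 M1.
apply: NNPP => /not_or_and [/meetS [s [Ss Ms]] /meetS [t [St Mt]]].
exact: MS (S_mul _ _ Ss St) (idadd_principal_mul idM Mab Ms Mt).
Qed.

Lemma prime_avoiding_powers I x : is_ideal I -> (forall k, ~ I (x ^+ k)) ->
  exists P, [/\ is_prime_ideal P, subR I P & ~ P x].
Proof.
move=> idI Ix.
have [P [primeP IP PS]] : exists P, [/\ is_prime_ideal P, subR I P &
    forall y, (exists k, y = x ^+ k) -> ~ P y].
  apply: prime_avoiding => // [|_ _ [i ->] [j ->]|_ [k ->] //].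
    by exists 0%N; rewrite expr0.
  by exists (i + j)%N; rewrite exprD.
by exists P; split=> // Px; apply: (PS x) => //; exists 1%N; rewrite expr1.
Qed.

(* The elements s x^k with s outside P form a multiplicative set; a prime
   avoiding it and containing 0 would lie strictly inside P. *)
Lemma minimal_prime_annihilated_expr P x : minimal_prime P -> P x ->
  exists s k, ~ P s /\ s * x ^+ k = 0.
Proof.
move=> [[idP P1 P_mul] minP] Px; apply: NNPP => no_s.
have [P' [primeP' _ P'S]] : exists P',
    [/\ is_prime_ideal P', subR (fun w => w = 0) P' &
         forall y, (exists s k, ~ P s /\ y = s * x ^+ k) -> ~ P' y].
  apply: prime_avoiding => [|||_ [s [k [Ps ->]]] sxk0]; first exact: eq0_is_ideal.
  - by exists 1, 0%N; rewrite expr0 mulr1.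
  - move=> _ _ [s [i [Ps ->]]] [t [j [Pt ->]]].
    exists (s * t), (i + j)%N; split; first by case/P_mul.
    by rewrite exprD; ring.
  - by apply: no_s; exists s, k.
apply: (minP P' primeP'); split.
  move=> y P'y; apply: NNPP => Py; apply: (P'S y) => //.
  by exists y, 0%N; rewrite expr0 mulr1.
by move=> /(_ x Px) P'x; apply: (P'S x) => //; exists 1, 1%N; rewrite expr1 mul1r.
Qed.

Lemma minimal_prime_annihilated_idpow P I : minimal_prime P -> is_ideal I -> subR I P ->
  exists s K, ~ P s /\ forall w, idpow I K w -> s * w = 0.
Proof.
move=> minP idI IP; have [[_ P1 P_mul] _] := minP.
have id0 := eq0_is_ideal.
pose F X := subR X I /\ exists s K, ~ P s /\ forall w, idpow X K w -> s * w = 0.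
have F0 : F (fun w => w = 0).
  split=> [_ -> |]; first exact: (ideal0 idI).
  exists 1, 1%N; split=> // w Xw; rewrite mul1r.
  by apply: (idmul_min id0 _ Xw) => a b -> _; rewrite mul0r.
have [X [idX [XI [s [K [Ps sXK]]]] maxX]] := noetherian_maximal id0 F0.
have IX : subR I X.
  move=> x Ix; apply: NNPP => Xx.
  have [t [k [Pt txk]]] := minimal_prime_annihilated_expr minP (IP x Ix).
  have idXx := idadd_is_ideal idX (principal_is_ideal x).
  apply/Xx/(maxX _ idXx _ (idadd_subl (principal_is_ideal x))).
    split=> [_ [y [_ [Xy [c ->] ->]]]|].
      exact: (idealD idI (XI y Xy) (idealMl idI c Ix)).
    exists (s * t), (K + k)%N; split; first by case/P_mul.
    move=> w /(idpow_idadd_split idX (principal_is_ideal x)).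
    move=> [y [_ [Xy /principal_pow [c ->] ->]]].
    have -> : s * t * (y + c * x ^+ k) = t * (s * y) + c * s * (t * x ^+ k) by ring.
    by rewrite sXK // txk !mulr0 addr0.
  exact: (idadd_subr idX (principal_mem x)).
by exists s, K; split=> // w /(idpowS IX); apply: sXK.
Qed.

Lemma annihilator_expr_stationary s : exists j, (0 < j)%N /\
  forall c, c * s ^+ (j + j) = 0 -> c * s ^+ j = 0.
Proof.
pose chain k := fun c : R => c * s ^+ (2 ^ k) = 0.
have [N chain_stops] : exists N, subR (chain N.+1) (chain N).
  apply: noetherian_stationary => k.
    split=> [|x y|a x]; rewrite /chain; first by rewrite mul0r.
      by rewrite mulrDl => -> ->; rewrite addr0.
    by rewrite -mulrA => ->; rewrite mulr0.
  by move=> c; rewrite /chain expnS mul2n -addnn exprD mulrA => ->; rewrite mul0r.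
exists (2 ^ N)%N; split; first by rewrite expn_gt0.
by move=> c; rewrite addnn -mul2n -expnS; apply: chain_stops.
Qed.

Lemma minimal_prime_principal_disjoint P I : minimal_prime P -> is_ideal I -> subR I P ->
  exists z e, ~ P z /\ forall w, idpow I e w -> principal z w -> w = 0.
Proof.
move=> minP idI IP.
have [s [e [Ps sIe]]] := minimal_prime_annihilated_idpow minP idI IP.
have [[|j] [// _ ann_stable]] := annihilator_expr_stationary s.
exists (s ^+ j.+1), e; split; first exact: prime_notin_expr minP.1 Ps.
move=> w /sIe sw0 [c cw]; rewrite cw; apply: ann_stable.
by rewrite exprD mulrA -cw exprS mulrA (mulrC w) sw0 mul0r.
Qed.

End Noetherian.

Lemma idpow_reduction_shift Q J r d :
  eqR (idpow Q r.+1) (idmul J (idpow Q r)) ->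
  subR (idpow Q (r + d).+1) (idmul J (idpow Q (r + d))).
Proof.
move=> red; elim: d => [|d IHd]; first by rewrite addn0 => x /red.
by rewrite addnS => x /(idmulS (@subRR Q) IHd) /idmulCA.
Qed.

Lemma has_n_generated_reduction_unit n I : (0 < n)%N -> is_ideal I -> I 1 ->
  has_n_generated_reduction n I.
Proof.
move=> n_gt0 idI I1; exists I; split.
  by split=> //; exists 1%N; split=> // x.
exists (fun _ => 1) => x; split=> [Ix|]; last by apply: gen_min => // _ [i ->].
rewrite -[x]mulr1; apply: (idealMl (gen_is_ideal _)); apply: sub_gen.
by exists (Ordinal n_gt0).
Qed.

Lemma n_generated_lift n J I Z : n_generated n J -> subR J (idadd I Z) -> is_ideal Z ->
  exists f : 'I_n -> R,
    (forall i, I (f i)) /\ subR J (idadd (gen (fun w => exists i, w = f i)) Z).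
Proof.
move=> [g Jg] JIZ idZ.
have [f fP] : exists f : 'I_n -> R, forall i, I (f i) /\ exists q, Z q /\ g i = f i + q.
  apply: (choice (fun i p => I p /\ exists q, Z q /\ g i = p + q)) => i.
  have [p [q [Ip Zq ->]]] : idadd I Z (g i) by apply/JIZ/Jg; apply: sub_gen; exists i.
  by exists p; split=> //; exists q.
exists f; split=> [i|x /Jg]; first by case: (fP i).
apply: gen_min => [|_ [i ->]]; first exact: idadd_is_ideal (gen_is_ideal _) idZ.
have [_ [q [Zq ->]]] := fP i.
by exists (f i), q; split=> //; apply: sub_gen; exists i.
Qed.

Lemma has_n_generated_reduction_idadd_principal n I z e : is_ideal I ->
  (forall w, idpow I e w -> principal z w -> w = 0) ->
  has_n_generated_reduction n (idadd I (principal z)) -> has_n_generated_reduction n I.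
Proof.
move=> idI Ie_z [J [[idJ JQ [r [r_gt0 red]]] Jgen]].
have idZ := principal_is_ideal z.
have [f [If JJ'Z]] := n_generated_lift Jgen JQ idZ.
pose J' := gen (fun w => exists i, w = f i).
have J'I : subR J' I by apply: gen_min => // _ [i ->].
exists J'; split; last by exists f.
split=> //; first exact: gen_is_ideal.
exists (r + e)%N; split=> [|x]; first by rewrite addn_gt0 r_gt0.
split=> [Ix|]; last exact: idmulS.
have /(idpow_reduction_shift (d := e) red) : idpow (idadd I (principal z)) (r + e).+1 x.
  exact: (idpowS (idadd_subl idZ) Ix).
move=> /(idmulS JJ'Z (idpow_idadd idZ)) /(idmul_idadd idZ) [u [w [J'u Zw x_uw]]].
have Iu : idpow I (r + e).+1 u := idmulS J'I (@subRR _) J'u.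
have Iw : idpow I (r + e).+1 w.
  by rewrite -[w](addKr u) addrC -x_uw; apply: (idealB (idpow_is_ideal _ _)).
rewrite x_uw (Ie_z w) ?addr0 //; apply: (idpow_leq _ Iw).
exact: leq_trans (leq_addl r e) (leqnSn _).
Qed.

End Ideals.

Theorem proposition2p2 (R : comNzRingType) (m : R -> Prop) (n : nat) :
  noetherian R -> local_with m -> krull_dim_one R -> (0 < n)%N ->
  (forall Q : R -> Prop, primary_to m Q -> has_n_generated_reduction n Q) ->
  forall I : R -> Prop, is_ideal I -> has_n_generated_reduction n I.
Proof.
move=> noethR local_m dim1 n_gt0 primary_red I idI; apply: NNPP => no_redI.
have [M [idM no_redM maxM]] :=
  noetherian_maximal noethR (F := fun X => ~ has_n_generated_reduction n X) idI no_redI.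
apply: no_redM; have [M1|M1] := classic (M 1).
  exact: has_n_generated_reduction_unit.
have [m_rad|] := classic (forall x, m x -> exists k, M (x ^+ k)).
  by apply/primary_red/local_primary_to.
move=> /not_all_ex_not [x /(@imply_to_and (m x)) [mx /not_ex_all_not Mx]].
have [P [primeP MP Px]] := prime_avoiding_powers noethR idM Mx.
have Pm : subR P m.
  by case: primeP => idP P1 _; apply: (proper_ideal_sub_local noethR local_m idP P1).
have minP : minimal_prime P.
  apply: (krull_dim_one_minimal_prime dim1 primeP (maximal_ideal_prime local_m.1)).
  by split=> // /(_ x mx).
have [z [e [Pz Me_z]]] := minimal_prime_principal_disjoint noethR minP idM MP.
apply: (has_n_generated_reduction_idadd_principal idM Me_z).
apply: NNPP => no_red; apply/Pz/MP.
have idMz := idadd_is_ideal idM (principal_is_ideal z).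
apply: (maxM _ idMz no_red (idadd_subl (principal_is_ideal z))).
exact: (idadd_subr idM (principal_mem z)).
Qed.
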